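(* Let $\Gamma$ be the middle-third Cantor set. The set of all uniformly perfect metrics in $\mathrm{Met}(\Gamma)$ is an $F_\sigma$ subset of $(\mathrm{Met}(\Gamma),\mathcal{D}_\Gamma)$.
   Context: $\mathrm{Met}(\Gamma)$ is the set of all metrics on $\Gamma$ generating its topology; $\mathcal{D}_\Gamma(d,e)=\sup_{x,y}|d(x,y)-e(x,y)|$. A metric space $(X,d)$ is uniformly perfect if there is $c\in(0,1)$ such that for every $x\in X$ and every $r\in(0,\delta_d(X))$ ($\delta_d$ = diameter) there is $y\in X$ with $cr\le d(x,y)\le r$. $F_\sigma$: countable union of closed sets. *)

From HB Require Import structures.
From mathcomp Require Import all_boot all_order all_algebra.
From mathcomp Require Import all_classical all_reals.
From mathcomp Require Import ereal.
Set Implicit Arguments. Unset Strict Implicit. Unset Printing Implicit Defensive.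
Import Order.TTheory GRing.Theory Num.Theory.
Local Open Scope classical_set_scope.
Local Open Scope ring_scope.

Section Defs.
Variable R : realType.

(* Middle-third Cantor set: C_0 = [0,1], C_{n+1} = C_n/3 ∪ (2/3 + C_n/3),
   Gamma = ⋂_n C_n. *)
Fixpoint cantor_stage (n : nat) : set R :=
  match n with
  | 0%N => [set x | 0 <= x <= 1]
  | n'.+1 => [set x | cantor_stage n' (3 * x) \/ cantor_stage n' (3 * x - 2)]
  end.

Definition cantor_set : set R := \bigcap_(n in setT) cantor_stage n.

Definition Gam : Type := {x : R | cantor_set x}.

Definition is_metric (T : Type) (d : T -> T -> R) : Prop :=
  [/\ forall x y, 0 <= d x y,
      forall x y, d x y = 0 <-> x = y,
      forall x y, d x y = d y x &
      forall x y z, d x z <= d x y + d y z].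

Definition metric_open (T : Type) (d : T -> T -> R) (U : set T) : Prop :=
  forall x, U x -> exists2 r : R, 0 < r & forall y, d x y < r -> U y.

Definition euclid_Gam (x y : Gam) : R := `|sval x - sval y|.

Definition Met : set (Gam -> Gam -> R) :=
  [set d | is_metric d /\
     forall U : set Gam, metric_open d U <-> metric_open euclid_Gam U].

Definition DGam (d e : Gam -> Gam -> R) : \bar R :=
  ereal_sup [set (`|d xy.1 xy.2 - e xy.1 xy.2|)%:E | xy in [set: Gam * Gam]].

Definition diam (T : Type) (d : T -> T -> R) : \bar R :=
  ereal_sup [set (d xy.1 xy.2)%:E | xy in [set: T * T]].

Definition uniformly_perfect (T : Type) (d : T -> T -> R) : Prop :=
  exists2 c : R, 0 < c < 1 &
    forall (x : T) (r : R), 0 < r -> (r%:E < diam d)%E ->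
      exists y : T, c * r <= d x y <= r.

Definition Met_closed (F : set (Gam -> Gam -> R)) : Prop :=
  (F `<=` Met)%classic /\
  forall d, Met d ->
    (forall eps : R, 0 < eps -> exists2 e, F e & (DGam d e < eps%:E)%E) ->
    F d.

Definition Met_Fsigma (A : set (Gam -> Gam -> R)) : Prop :=
  exists F : nat -> set (Gam -> Gam -> R),
    (forall n, Met_closed (F n)) /\ A = \bigcup_(n in [set: nat]) F n.

End Defs.

From HB Require Import structures.
From mathcomp Require Import all_boot all_order all_algebra.
From mathcomp Require Import all_classical all_reals.
From mathcomp Require Import ereal.
From mathcomp Require Import lra.
Set Implicit Arguments. Unset Strict Implicit. Unset Printing Implicit Defensive.
Local Open Scope classical_set_scope.

(* The uniformly perfect metrics are the union over n of the sets
     F_n = { d in Met | d is a uniform limit of functions that are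
             uniformly perfect with constant 1/(n+1) }.
   Nothing about the Cantor set is used: the argument works for functions
   T -> T -> R on an arbitrary type T.
   - F_n is closed in (Met, D_Gamma): a uniform limit of uniform limits of
     1/(n+1)-perfect functions is again such a limit (triangle inequality).
   - Each d in F_n is uniformly perfect: approximating d within c*r/8 by a
     c-perfect e, the point e provides at scale r/2 is a witness for d at
     scale r, with constant c/4 (this is where the "uniform" matters).
   - Conversely a uniformly perfect d with constant c >= 1/(n+1) lies in
     F_n, being its own approximation. *)

Section UniformlyPerfect.
Import Order.TTheory GRing.Theory Num.Theory.
Local Open Scope ring_scope.
Variables (R : realType) (T : Type).
Implicit Types (d e : T -> T -> R) (c eps r : R).

Definition perfect_with c d : Prop :=
  forall x r, 0 < r -> (r%:E < diam d)%E -> exists y, c * r <= d x y <= r.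

Definition unif_close eps d e : Prop := forall a b, `|d a b - e a b| <= eps.

Definition approx_perfect c d : Prop :=
  forall eps, 0 < eps -> exists2 e, perfect_with c e & unif_close eps d e.

Lemma perfect_withW c' c d : c' <= c -> perfect_with c d -> perfect_with c' d.
Proof.
move=> c'c Hd x r r0 rd; have [y /andP[cy yr]] := Hd x r r0 rd.
by exists y; rewrite yr andbT (le_trans _ cy) // ler_pM2r.
Qed.

Lemma perfect_with_approx c d : perfect_with c d -> approx_perfect c d.
Proof. by move=> Hd eps eps0; exists d => // a b; rewrite subrr normr0 ltW. Qed.

Lemma approx_perfect_closed c d :
  (forall eps, 0 < eps -> exists2 e, approx_perfect c e & unif_close eps d e) ->
  approx_perfect c d.
Proof.
move=> Hd eps eps0; have eps2 : 0 < eps / 2 by rewrite divr_gt0.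
have [e He de] := Hd _ eps2; have [e' He' ee'] := He _ eps2.
exists e' => // a b.
rewrite -(subrKA (e a b)) [leRHS](splitr eps).
by apply: le_trans (ler_normD _ _) _; apply: lerD; [apply: de|apply: ee'].
Qed.

Lemma diam_unif_close {eps r d e} :
  unif_close eps d e -> (r%:E < diam d)%E -> ((r - eps)%:E < diam e)%E.
Proof.
move=> de /ereal_sup_gt[_ [[x y] _ <-]] /=; rewrite lte_fin => rxy.
apply: (lt_le_trans (y := (e x y)%:E)); last by apply: ereal_sup_ubound; exists (x, y).
by have := de x y; rewrite lte_fin ler_norml => /andP[_ ?]; lra.
Qed.

Lemma approx_perfect_perfect c d :
  0 < c <= 1 -> approx_perfect c d -> perfect_with (c / 4) d.
Proof.
move=> /andP[c0 c1] Hd x r r0 rd.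
have eps0 : 0 < c * r / 8 by rewrite !divr_gt0 ?mulr_gt0.
have eps_small : c * r / 8 <= r / 8 by rewrite ler_pM2r // ger_pMl.
have [e He de] := Hd _ eps0.
have er : ((r / 2)%:E < diam e)%E.
  apply: (le_lt_trans _ (diam_unif_close de rd)); rewrite lee_fin; lra.
have [y /andP[ey1 ey2]] := He x (r / 2) (divr_gt0 r0 (ltr0Sn _ 1)) er.
exists y; move: (de x y); rewrite ler_norml => /andP[dy1 dy2].
have -> : c / 4 * r = c * r / 4 by rewrite mulrAC.
by move: ey1; rewrite mulrA => ey1; apply/andP; split; lra.
Qed.

End UniformlyPerfect.

Section Levels.
Import Order.TTheory GRing.Theory Num.Theory.
Local Open Scope ring_scope.
Variable R : realType.

Definition level_const (n : nat) : R := (n.+1%:R)^-1.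

Lemma level_const_gt0 n : 0 < level_const n.
Proof. by rewrite /level_const invr_gt0 ltr0n. Qed.

Lemma level_const_le1 n : level_const n <= 1.
Proof. by rewrite /level_const invf_le1 ?ltr0n // ler1n. Qed.

Lemma level_const_le c : 0 < c -> exists n, level_const n <= c.
Proof.
move=> c0; exists (Num.truncn c^-1).
rewrite /level_const -[leRHS]invrK lef_pV2 ?posrE ?ltr0n ?invr_gt0 //.
exact/ltW/truncnS_gt.
Qed.

Definition up_level (n : nat) : set (Gam R -> Gam R -> R) :=
  [set d | Met d /\ approx_perfect (level_const n) d].

Lemma DGam_unif_close (d e : Gam R -> Gam R -> R) eps :
  (DGam d e < eps%:E)%E -> unif_close eps d e.
Proof.
move=> de a b; rewrite -lee_fin; apply/ltW/(le_lt_trans _ de).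
by apply: ereal_sup_ubound; exists (a, b).
Qed.

Lemma up_level_closed n : Met_closed (up_level n).
Proof.
split=> [d []//|d Md Hd]; split=> //; apply: approx_perfect_closed => eps eps0.
have [e [_ He] /DGam_unif_close de] := Hd _ eps0.
by exists e.
Qed.

Lemma up_level_uniformly_perfect n (d : Gam R -> Gam R -> R) : up_level n d -> uniformly_perfect d.
Proof.
move=> [_ Hd]; have c0 := level_const_gt0 n; have c1 := level_const_le1 n.
exists (level_const n / 4); last by apply: approx_perfect_perfect => //; lra.
by apply/andP; split; lra.
Qed.

Lemma uniformly_perfect_up_level (d : Gam R -> Gam R -> R) :
  Met d -> uniformly_perfect d -> exists n, up_level n d.
Proof.
move=> Md [c /andP[c0 _] Hd]; have [n cn] := level_const_le c0.
by exists n; split=> //; apply/perfect_with_approx/(perfect_withW cn).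
Qed.

End Levels.

Theorem lemma4p1 (R : realType) :
  Met_Fsigma [set d : Gam R -> Gam R -> R | Met d /\ uniformly_perfect d].
Proof.
exists (@up_level R); split; first exact: up_level_closed.
apply/seteqP; split=> [d [Md Ud]|d [n _ Hn]].
  by have [n Hn] := uniformly_perfect_up_level Md Ud; exists n.
by split; [case: Hn | exact: up_level_uniformly_perfect Hn].
Qed.
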